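(* Fix a state $s$, a receiver utility $u:\mathcal S\times\Omega\times\mathcal A\to[0,1]$, a function $Q:\mathcal S\times\Omega\times\mathcal A\to[0,H]$ and a prior $\mu\in\Delta(\Omega)$ that is $(p_0,D)$-regular at $s$, i.e. $\Pr_{\omega\sim\mu}[\omega\in\mathcal W_{s,a}(D)]\ge p_0$ for every $a\in\mathcal A$. Then for every $\epsilon>0$, $$\mathrm{Gap}\big(s,\mu,\mathbb B(\mu,\epsilon);Q\big)\le\frac{H\epsilon}{p_0D}.$$
   Context: $\mathcal A$ is a finite action set, $\mathcal S$ a state space and $\Omega$ an outcome space; $\Delta(\Omega)$ is the set of probability distributions on $\Omega$ (with densities/mass functions $\mu(\omega)$), and $\|\mu-\mu'\|_1=\int_\Omega|\mu(\omega)-\mu'(\omega)|\,\mathrm d\omega$. A signaling scheme $\pi$ assigns to each $(s,\omega)$ a distribution $\pi(\cdot\mid s,\omega)\in\Delta(\mathcal A)$. For a prior $\mu$ and utility $u$, $\mathrm{Pers}(\mu,u)$ is the set of $\pi$ with $\int_\Omega\mu(\omega)\pi(a\mid s,\omega)[u(s,\omega,a)-u(s,\omega,a')]\,\mathrm d\omega\ge0$ for all $a,a'\in\mathcal A$ and states $s$; for a set $\mathcal B\subseteq\Delta(\Omega)$, $\mathrm{Pers}(\mathcal B,u)=\bigcap_{\mu'\in\mathcal B}\mathrm{Pers}(\mu',u)$. $\langle Q,\mu\otimes\pi\rangle(s)=\mathbb E_{\omega\sim\mu,\,a\sim\pi(\cdot\mid s,\omega)}[Q(s,\omega,a)]$.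 The robustness gap is $\mathrm{Gap}(s,\mu,\mathcal B;Q)=\max_{\pi\in\mathrm{Pers}(\mu,u)}\langle Q,\mu\otimes\pi\rangle(s)-\max_{\pi\in\mathrm{Pers}(\mathcal B,u)}\langle Q,\mu\otimes\pi\rangle(s)$. $\mathbb B(\mu,\epsilon)=\{\mu'\in\Delta(\Omega):\|\mu-\mu'\|_1\le\epsilon\}$. $\mathcal W_{s,a}(D)=\{\omega:u(s,\omega,a)-u(s,\omega,a')\ge D\ \forall a'\in\mathcal A\setminus\{a\}\}$. *)

From HB Require Import structures.
From mathcomp Require Import all_boot all_order all_algebra.
From mathcomp Require Import all_classical all_reals all_analysis.
Set Implicit Arguments. Unset Strict Implicit. Unset Printing Implicit Defensive.
Import Order.TTheory GRing.Theory Num.Theory.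
Local Open Scope classical_set_scope.
Local Open Scope ring_scope.

Section Defs.
Context {R : realType} {d : measure_display} {Omega : measurableType d}
  (nu : {measure set Omega -> \bar R}).

Definition is_density (mu : Omega -> R) : Prop :=
  [/\ forall w, 0 <= mu w, measurable_fun setT mu &
      (\int[nu]_w (mu w)%:E = 1)%E].

Definition l1dist (mu mu' : Omega -> R) : \bar R :=
  \int[nu]_w (`|mu w - mu' w|)%:E.

Definition l1ball (mu : Omega -> R) (eps : R) : set (Omega -> R) :=
  [set mu' | is_density mu' /\ (l1dist mu mu' <= eps%:E)%E].

Variables (S : Type) (A : finType).

Definition signaling_scheme (pi : S -> Omega -> A -> R) : Prop :=
  (forall s w, (forall a, 0 <= pi s w a) /\ \sum_a pi s w a = 1) /\
  (forall s a, measurable_fun setT (fun w => pi s w a)).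

Definition Pers (mu : Omega -> R) (u : S -> Omega -> A -> R)
  : set (S -> Omega -> A -> R) :=
  [set pi | signaling_scheme pi /\
     forall s a a', (0 <= \int[nu]_w
         (mu w * pi s w a * (u s w a - u s w a'))%:E)%E].

Definition PersB (B : set (Omega -> R)) (u : S -> Omega -> A -> R)
  : set (S -> Omega -> A -> R) :=
  [set pi | signaling_scheme pi /\ forall mu', B mu' -> Pers mu' u pi].

Definition value (Q : S -> Omega -> A -> R) (mu : Omega -> R)
  (pi : S -> Omega -> A -> R) (s : S) : \bar R :=
  \int[nu]_w (mu w * \sum_a pi s w a * Q s w a)%:E.

(* Gap(s, mu, B; Q); the maxima are taken as suprema *)
Definition Gap (u Q : S -> Omega -> A -> R) (s : S) (mu : Omega -> R)
  (B : set (Omega -> R)) : \bar R :=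
  (ereal_sup [set value Q mu pi s | pi in Pers mu u] -
   ereal_sup [set value Q mu pi s | pi in PersB B u])%E.

Definition Wset (u : S -> Omega -> A -> R) (s : S) (a : A) (D : R) : set Omega :=
  [set w | forall a', a' != a -> D <= u s w a - u s w a'].

Definition regular (u : S -> Omega -> A -> R) (s : S) (mu : Omega -> R)
  (p0 D : R) : Prop :=
  forall a, (p0%:E <= \int[nu]_(w in Wset u s a D) (mu w)%:E)%E.

End Defs.

From HB Require Import structures.
From mathcomp Require Import all_boot all_order all_algebra.
From mathcomp Require Import all_classical all_reals all_analysis.
From mathcomp Require Import ring lra measurable_realfun.
Import Order.TTheory GRing.Theory Num.Theory.
Local Open Scope classical_set_scope.
Local Open Scope ring_scope.

(* Let pi be persuasive (obedient) for the prior mu and let sigma be the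
   full-information best-response scheme, which recommends a utility-maximizing
   action (ties broken by the enumeration of A).  sigma is obedient pointwise,
   and on W_{s,a}(D) it recommends a with a utility margin of at least D.
   At state s we mix:  pi_δ = (1 - δ) pi + δ sigma  (and use sigma elsewhere).
   For a prior mu' with ||mu - mu'||_1 <= eps, each obedience integral of pi_δ
   under mu' is at least  (1 - δ)·0 - eps + δ D p0  (pointwise bound
   [mixed_slack_bound], integrated in [mixed_obedience_margin]), so pi_δ is
   persuasive for the whole ball B(mu, eps) once eps <= δ D p0, while mixing
   costs the sender at most δ H ([mixed_payoff_bound]).  Choosing
   δ = min (eps / (p0 D)) 1 bounds the gap by H eps / (p0 D). *)

Section BooleanMeasurability.
Context {d : measure_display} {Omega : measurableType d}.

Lemma measurable_all {T : Type} (s : seq T) (P : T -> Omega -> bool) :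
  (forall t, measurable_fun setT (P t)) ->
  measurable_fun setT (fun w => all (fun t => P t w) s).
Proof.
move=> mP; elim: s => [|t s IH] /=; first exact: measurable_cst.
exact: measurable_and.
Qed.

Lemma measurable_true_set (f : Omega -> bool) :
  measurable_fun setT f -> measurable [set w | f w].
Proof.
move=> mf; have := mf measurableT [set true] I.
by rewrite setTI; congr measurable; apply/seteqP; split => w /=.
Qed.

End BooleanMeasurability.

Section BestResponse.
Context {R : realType} {d : measure_display} {Omega : measurableType d}
  {S : Type} {A : finType} (u : S -> Omega -> A -> R).

Definition maximizer (s : S) (w : Omega) (a : A) : bool :=
  all (fun b => u s w b <= u s w a) (enum A).

Definition selected (s : S) (w : Omega) (a : A) : bool :=
  maximizer s w a &&
  all (fun b => (enum_rank b < enum_rank a)%N ==> ~~ maximizer s w b) (enum A).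

Definition best_response (s : S) (w : Omega) (a : A) : R :=
  if selected s w a then 1 else 0.

Lemma maximizerP s w a : maximizer s w a <-> forall b, u s w b <= u s w a.
Proof.
split => [/allP max_a b|max_a]; first by apply: max_a; rewrite mem_enum.
by apply/allP => b _; apply: max_a.
Qed.

Lemma selected_exists s w (a0 : A) : exists a, selected s w a.
Proof.
have [am _ am_max] := @arg_maxP _ _ A a0 predT (fun b => u s w b) isT.
have max_am : maximizer s w am by apply/maximizerP => b; exact: am_max.
have [a max_a min_a] := arg_minnP (fun b => nat_of_ord (enum_rank b)) max_am.
exists a; apply/andP; split => //; apply/allP => b _; apply/implyP => lt_ba.
by apply/negP => max_b; have := min_a b max_b; rewrite leqNgt lt_ba.
Qed.

Lemma selected_unique {s w a b} : selected s w a -> selected s w b -> a = b.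
Proof.
move=> /andP[max_a /allP min_a] /andP[max_b /allP min_b].
case: (ltngtP (enum_rank a) (enum_rank b)) => cmp.
- by have := min_b a (mem_enum _ a); rewrite cmp max_a.
- by have := min_a b (mem_enum _ b); rewrite cmp max_b.
- exact/enum_rank_inj/val_inj.
Qed.

Lemma best_response_bounds s w a : 0 <= best_response s w a <= 1.
Proof. by rewrite /best_response; case: ifP => _; rewrite ?lexx ?ler01. Qed.

Lemma best_response_sum s w (a0 : A) : \sum_a best_response s w a = 1.
Proof.
have [a sel_a] := selected_exists s w a0.
rewrite (bigD1 a) //= big1 ?addr0 /best_response ?sel_a // => b neq_ba.
by case: ifP => // sel_b; rewrite (selected_unique sel_b sel_a) eqxx in neq_ba.
Qed.

Lemma best_response_obedient s w a a' :
  0 <= best_response s w a * (u s w a - u s w a').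
Proof.
rewrite /best_response; case: ifP => [/andP[/maximizerP max_a _]|_].
  by rewrite mul1r subr_ge0.
by rewrite mul0r.
Qed.

(* On W_{s,a}(D) the action [a] is the unique maximizer, hence recommended. *)
Lemma best_response_Wset {s a D w} :
  0 < D -> Wset u s a D w -> best_response s w a = 1.
Proof.
move=> D0 Ww; rewrite /best_response; suff -> : selected s w a by [].
have max_a : maximizer s w a.
  apply/maximizerP => b; have [->|neq_ba] := eqVneq b a; first exact: lexx.
  have := Ww b neq_ba; lra.
rewrite /selected max_a /=; apply/allP => b _; apply/implyP => lt_ba.
apply/negP => /maximizerP max_b.
have neq_ba : b != a by apply: contraTneq lt_ba => ->; rewrite ltnn.
have := Ww b neq_ba; have := max_b a; lra.
Qed.

Lemma best_response_gain {s a a' D w} :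
  0 < D -> a != a' -> Wset u s a D w ->
  D <= best_response s w a * (u s w a - u s w a').
Proof.
move=> D0 neq_aa' Ww; rewrite (best_response_Wset D0 Ww) mul1r.
by apply: Ww; rewrite eq_sym.
Qed.

Hypothesis u_meas : forall s a, measurable_fun setT (fun w => u s w a).

Lemma maximizer_measurable s a : measurable_fun setT (fun w => maximizer s w a).
Proof.
apply: (measurable_all (enum A) (fun b w => u s w b <= u s w a)) => b.
exact: measurable_fun_ler.
Qed.

Lemma best_response_measurable s a :
  measurable_fun setT (fun w => best_response s w a).
Proof.
have sel_meas : measurable_fun setT (fun w => selected s w a).
  apply: measurable_and; first exact: maximizer_measurable.
  apply: (measurable_all (enum A)
    (fun b w => (enum_rank b < enum_rank a)%N ==> ~~ maximizer s w b)) => b.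
  case: (_ < _)%N => /=; last exact: measurable_cst.
  exact/measurable_neg/maximizer_measurable.
by apply: measurable_fun_ifT => //; exact: measurable_cst.
Qed.

Lemma Wset_measurable s a D : measurable (Wset u s a D).
Proof.
have -> : Wset u s a D =
    [set w | all (fun b => (b != a) ==> (D <= u s w a - u s w b)) (enum A)].
  apply/seteqP; split => w /=.
  - by move=> Ww; apply/allP => b _; apply/implyP => /Ww.
  - by move=> /allP Ww b neq_ba; have /implyP := Ww b (mem_enum _ b); apply.
apply/measurable_true_set/(measurable_all (enum A)
  (fun b w => (b != a) ==> (D <= u s w a - u s w b))) => b.
case: (b != a) => /=; last exact: measurable_cst.
apply: measurable_fun_ler; first exact: measurable_cst.
exact: measurable_funB.
Qed.

End BestResponse.

Section SchemeFacts.
Context {R : realType} {d : measure_display} {Omega : measurableType d}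
  {S : Type} {A : finType}.

Lemma scheme_inhabited {sigma : S -> Omega -> A -> R} (s : S) :
  signaling_scheme sigma -> inhabited A.
Proof.
move=> [distr _]; have [a _|no_action] := pickP (@predT A); first by [].
have [_] := distr s point; rewrite big_pred0 // => /eqP.
by rewrite eq_sym oner_eq0.
Qed.

Lemma scheme_bounds {sigma : S -> Omega -> A -> R} s w a :
  signaling_scheme sigma -> 0 <= sigma s w a <= 1.
Proof.
move=> [distr _]; have [pi_ge0 pi_sum1] := distr s w.
rewrite pi_ge0 /= -pi_sum1 (bigD1 a) //= lerDl.
exact: sumr_ge0.
Qed.

End SchemeFacts.

Section Integrability.
Context {R : realType} {d : measure_display} {Omega : measurableType d}
  {nu : {measure set Omega -> \bar R}}.

Lemma density_integrable {m : Omega -> R} :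
  is_density nu m -> nu.-integrable setT (EFin \o m).
Proof.
case=> m_ge0 m_meas m_int1; apply/integrableP; split; first exact/measurable_EFinP.
under eq_integral => w _ do rewrite /= ger0_norm //.
by rewrite m_int1 ltry.
Qed.

Lemma dominated_integrable {m f : Omega -> R} :
  is_density nu m -> measurable_fun setT f -> (forall w, `|f w| <= m w) ->
  nu.-integrable setT (EFin \o f).
Proof.
move=> dm f_meas f_le; have [m_ge0 _ _] := dm.
apply: (le_integrable measurableT _ _ (density_integrable dm)).
  exact/measurable_EFinP.
by move=> w _ /=; rewrite lee_fin (ger0_norm (m_ge0 w)).
Qed.

Lemma density_weighted_integrable {m x y : Omega -> R} :
  is_density nu m -> measurable_fun setT x -> measurable_fun setT y ->
  (forall w, 0 <= x w <= 1) -> (forall w, `|y w| <= 1) ->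
  nu.-integrable setT (EFin \o (fun w => m w * x w * y w)).
Proof.
move=> dm x_meas y_meas x01 y1; have [m_ge0 m_meas _] := dm.
apply: (dominated_integrable dm).
  by apply: measurable_funM => //; apply: measurable_funM.
move=> w; have /andP[x0 x1] := x01 w.
rewrite !normrM (ger0_norm (m_ge0 w)) (ger0_norm x0) -mulrA.
by apply: ler_piMr => //; apply: mulr_ile1.
Qed.

Lemma l1_integrable {m m' : Omega -> R} :
  is_density nu m -> is_density nu m' ->
  nu.-integrable setT (EFin \o (fun w => `|m w - m' w|)).
Proof.
move=> dm dm'; apply: (integrable_norm (f := fun w => m w - m' w)).
exact: (integrableB measurableT (density_integrable dm) (density_integrable dm')).
Qed.

End Integrability.

(* Write the mixed
   recommendation probability as (1-δ) p + δ r with gain g = u(a) - u(a').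
   Replacing the prior density m by m' costs at most |m - m'| (the mixed
   gain lies in [-1,1]), while the δ-part alone earns δ t m as soon as the
   best-response gain r g is at least t. *)
Lemma mixed_slack_bound {R : realFieldType} {m p r g δ : R} (m' t : R) :
  0 <= m -> 0 <= p <= 1 -> 0 <= r <= 1 -> `|g| <= 1 -> 0 <= δ <= 1 ->
  t <= r * g ->
  (1 - δ) * (m * p * g) - `|m - m'| + δ * t * m
    <= m' * ((1 - δ) * p + δ * r) * g.
Proof.
move=> m0 /andP[p0 p1] /andP[r0 r1] g1 /andP[δ0 δ1] trg.
set X := ((1 - δ) * p + δ * r) * g.
have X1 : `|X| <= 1.
  rewrite /X normrM ger0_norm; last by apply: addr_ge0; apply: mulr_ge0; lra.
  apply: mulr_ile1 => //; first by apply: addr_ge0; apply: mulr_ge0; lra.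
  have : (1 - δ) * p <= 1 - δ by apply: ler_piMr; lra.
  have : δ * r <= δ by apply: ler_piMr.
  lra.
have perturbation : - `|m - m'| <= (m' - m) * X.
  apply: lerNnormlW; rewrite normrM distrC.
  by apply: ler_piMr.
have mixed_part : (1 - δ) * (m * p * g) + δ * t * m <= m * X.
  have mδ : 0 <= m * δ by exact: mulr_ge0.
  rewrite /X; nra.
have -> : m' * ((1 - δ) * p + δ * r) * g = m * X + (m' - m) * X.
  by rewrite /X; ring.
lra.
Qed.

Section RobustObedience.
Context {R : realType} {d : measure_display} {Omega : measurableType d}
  (nu : {measure set Omega -> \bar R}) {S : Type} {A : finType}
  (u : S -> Omega -> A -> R).
Hypothesis u01 : forall s w a, 0 <= u s w a <= 1.
Hypothesis u_meas : forall s a, measurable_fun setT (fun w => u s w a).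

Lemma utility_gain_bound s w a a' : `|u s w a - u s w a'| <= 1.
Proof. by have := u01 s w a; have := u01 s w a'; rewrite ler_norml; lra. Qed.

Variables (s : S) (a a' : A) (D δ : R) (m m' p : Omega -> R).
Hypotheses (dm : is_density nu m) (dm' : is_density nu m').
Hypotheses (p01 : forall w, 0 <= p w <= 1) (p_meas : measurable_fun setT p).
Hypotheses (D0 : 0 < D) (δ01 : 0 <= δ <= 1) (neq_aa' : a != a').

Lemma mixed_bounds w : 0 <= (1 - δ) * p w + δ * best_response u s w a <= 1.
Proof.
have := p01 w; have := best_response_bounds u s w a; case/andP: δ01 => δ0 δ1.
move=> /andP[r0 r1] /andP[p0 p1].
have : 0 <= (1 - δ) * p w <= 1 - δ by rewrite mulr_ge0 ?ler_piMr //=; lra.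
have : 0 <= δ * best_response u s w a <= δ by rewrite mulr_ge0 ?ler_piMr.
move=> /andP[? ?] /andP[? ?]; apply/andP; split; lra.
Qed.

Lemma mixed_obedience_margin :
  ((1 - δ)%:E * \int[nu]_w (m w * p w * (u s w a - u s w a'))%:E
   - \int[nu]_w (`|m w - m' w|)%:E
   + (δ * D)%:E * \int[nu]_(w in Wset u s a D) (m w)%:E
  <= \int[nu]_w (m' w * ((1 - δ) * p w + δ * best_response u s w a)
                   * (u s w a - u s w a'))%:E)%E.
Proof.
have [m_ge0 m_meas _] := dm.
set W := Wset u s a D.
have W_meas : measurable W by exact: Wset_measurable.
have gain_meas : measurable_fun setT (fun w => u s w a - u s w a').
  exact: measurable_funB.
have mix_meas : measurable_fun setT
    (fun w => (1 - δ) * p w + δ * best_response u s w a).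
  by apply: measurable_funD; apply: measurable_funM => //;
    exact: best_response_measurable.
have int_prior := density_weighted_integrable dm p_meas gain_meas p01
  (fun w => utility_gain_bound s w a a').
have int_mixed := density_weighted_integrable dm' mix_meas gain_meas
  mixed_bounds (fun w => utility_gain_bound s w a a').
have int_l1 := l1_integrable dm dm'.
have int_W : nu.-integrable setT ((EFin \o m) \_ W).
  apply: (integrable_mkcond _ W_meas).1.
  exact: integrableS measurableT W_meas (@subsetT _ W) (density_integrable dm).
have int_scaled : nu.-integrable setT
    (EFin \o (fun w => (1 - δ) * (m w * p w * (u s w a - u s w a')))).
  by apply: eq_integrable (integrableZl measurableT (1 - δ) int_prior).
pose h w := ((((1 - δ) * (m w * p w * (u s w a - u s w a')))%:E
              - (`|m w - m' w|)%:E) + (δ * D)%:E * ((EFin \o m) \_ W) w)%E.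
have int_h : nu.-integrable setT h.
  apply: (integrableD measurableT (integrableB measurableT int_scaled int_l1)).
  exact: integrableZl.
rewrite [X in (X <= _)%E](_ : _ = \int[nu]_w h w)%E; last first.
  rewrite (integralD measurableT (integrableB measurableT int_scaled int_l1));
    last exact: integrableZl.
  rewrite (integralB_EFin measurableT int_scaled int_l1).
  rewrite (integralZl measurableT int_W) -integral_mkcond.
  congr (_ - _ + _)%E.
  rewrite -(integralZl measurableT int_prior).
  by apply: eq_integral => w _; rewrite EFinM.
apply: (le_integral measurableT int_h int_mixed) => w _; rewrite /h.
have slack t := mixed_slack_bound (m' w) t (m_ge0 w) (p01 w)
  (best_response_bounds u s w a) (utility_gain_bound s w a a') δ01.
have [Ww|nWw] := pselect (W w).
- rewrite patchE mem_set //= -EFinM -EFinD lee_fin.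
  exact: slack _ (best_response_gain u D0 neq_aa' Ww).
- rewrite patchE memNset //= mule0 adde0 lee_fin.
  have := slack 0 (best_response_obedient u s w a a').
  by rewrite mulr0 mul0r addr0.
Qed.

Lemma mixed_obedience_robust (eps p0 : R) :
  (0 <= \int[nu]_w (m w * p w * (u s w a - u s w a'))%:E)%E ->
  (l1dist nu m m' <= eps%:E)%E ->
  (p0%:E <= \int[nu]_(w in Wset u s a D) (m w)%:E)%E ->
  eps <= δ * D * p0 ->
  (0 <= \int[nu]_w (m' w * ((1 - δ) * p w + δ * best_response u s w a)
                     * (u s w a - u s w a'))%:E)%E.
Proof.
move=> obedient close regular eps_le; apply: le_trans mixed_obedience_margin.
have [δ0 δ1] := andP δ01.
have obedience_part : (0 <= (1 - δ)%:E *
    \int[nu]_w (m w * p w * (u s w a - u s w a'))%:E)%E.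
  by apply: mule_ge0 => //; rewrite lee_fin subr_ge0.
have distance_part : (- eps%:E <= - \int[nu]_w (`|m w - m' w|)%:E)%E.
  by rewrite leeN2.
have mass_part : (eps%:E <= (δ * D)%:E *
    \int[nu]_(w in Wset u s a D) (m w)%:E)%E.
  apply: (@le_trans _ _ ((δ * D)%:E * p0%:E)%E); first by rewrite -EFinM lee_fin.
  by apply: lee_wpmul2l => //; rewrite lee_fin mulr_ge0 // ltW.
apply: le_trans (leeD (leeD obedience_part distance_part) mass_part).
by rewrite add0e -EFinN -EFinD addNr.
Qed.

End RobustObedience.

Lemma mixed_payoff_bound {R : realFieldType} {I : finType} (p r q : I -> R)
    (H δ : R) :
  (forall i, 0 <= p i) -> \sum_i p i = 1 -> (forall i, 0 <= r i) ->
  (forall i, 0 <= q i <= H) -> 0 <= δ <= 1 ->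
  \sum_i p i * q i <= \sum_i ((1 - δ) * p i + δ * r i) * q i + δ * H.
Proof.
move=> p_ge0 p_sum1 r_ge0 q0H /andP[δ0 δ1].
have -> : \sum_i ((1 - δ) * p i + δ * r i) * q i =
    (1 - δ) * \sum_i p i * q i + δ * \sum_i r i * q i.
  by rewrite !mulr_sumr -big_split /=; apply: eq_bigr => i _; ring.
have pq_le : \sum_i p i * q i <= H.
  rewrite -[H]mul1r -p_sum1 mulr_suml; apply: ler_sum => i _.
  by apply: ler_wpM2l => //; case/andP: (q0H i).
have rq_ge0 : 0 <= \sum_i r i * q i.
  by apply: sumr_ge0 => i _; apply: mulr_ge0 => //; case/andP: (q0H i).
nra.
Qed.

Section ValueLoss.
Context {R : realType} {d : measure_display} {Omega : measurableType d}
  (nu : {measure set Omega -> \bar R}) {S : Type} {A : finType}.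

Lemma value_mixing_loss (Q pi pi' rho : S -> Omega -> A -> R) (H δ : R)
    (s : S) (m : Omega -> R) :
  is_density nu m -> (forall w a, 0 <= Q s w a <= H) ->
  (forall a, measurable_fun setT (fun w => Q s w a)) ->
  (forall w a, 0 <= pi s w a) -> (forall w, \sum_a pi s w a = 1) ->
  (forall a, measurable_fun setT (fun w => pi s w a)) ->
  (forall w a, 0 <= rho s w a) ->
  (forall a, measurable_fun setT (fun w => pi' s w a)) ->
  0 <= δ <= 1 -> (forall w a, pi' s w a = (1 - δ) * pi s w a + δ * rho s w a) ->
  (value nu Q m pi s <= value nu Q m pi' s + (δ * H)%:E)%E.
Proof.
move=> [m_ge0 m_meas m_int1] Q0H Q_meas pi_ge0 pi_sum1 pi_meas rho_ge0 pi'_meas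
  δ01 pi'_eq.
have [δ0 δ1] := andP δ01.
have H0 : 0 <= H.
  have [a _|no_action] := pickP (@predT A).
    by case/andP: (Q0H point a); exact: le_trans.
  by have := pi_sum1 point; rewrite big_pred0 // => /eqP; rewrite eq_sym oner_eq0.
have pi'_ge0 w a : 0 <= pi' s w a.
  by rewrite pi'_eq addr_ge0 // mulr_ge0 // subr_ge0.
have payoff_ge0 (sigma : S -> Omega -> A -> R) w :
    (forall a, 0 <= sigma s w a) -> 0 <= m w * \sum_a sigma s w a * Q s w a.
  move=> sigma_ge0; apply: mulr_ge0 => //; apply: sumr_ge0 => a _.
  by apply: mulr_ge0 => //; case/andP: (Q0H w a).
have payoff_meas (sigma : S -> Omega -> A -> R) :
    (forall a, measurable_fun setT (fun w => sigma s w a)) ->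
    measurable_fun setT (fun w => (m w * \sum_a sigma s w a * Q s w a)%:E).
  move=> sigma_meas; apply/measurable_EFinP; apply: measurable_funM => //.
  by apply: measurable_sum => a; apply: measurable_funM.
rewrite /value; apply: (@le_trans _ _ (\int[nu]_w
    ((m w * \sum_a pi' s w a * Q s w a)%:E + (δ * H)%:E * (m w)%:E))%E).
  apply: ge0_le_integral => //.
  - by move=> w _; rewrite lee_fin payoff_ge0.
  - exact: payoff_meas.
  - apply: emeasurable_funD; first exact: payoff_meas.
    by apply: measurable_funeM; exact/measurable_EFinP.
  - move=> w _; rewrite -EFinM -EFinD lee_fin.
    have bound : \sum_a pi s w a * Q s w a
        <= \sum_a pi' s w a * Q s w a + δ * H.
      under [X in _ <= X + _]eq_bigr => a _ do rewrite pi'_eq.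
      exact: mixed_payoff_bound.
    by rewrite [X in _ <= _ + X]mulrC -mulrDr ler_wpM2l.
rewrite ge0_integralD //.
- rewrite ge0_integralZl //.
  + by rewrite m_int1 mule1.
  + exact/measurable_EFinP.
  + by move=> w _; rewrite lee_fin.
  + by rewrite lee_fin mulr_ge0.
- by move=> w _; rewrite lee_fin payoff_ge0.
- exact: payoff_meas.
- by move=> w _; rewrite -EFinM lee_fin mulr_ge0 // mulr_ge0.
- by apply: measurable_funeM; exact/measurable_EFinP.
Qed.

End ValueLoss.

Section MixedScheme.
Context {R : realType} {d : measure_display} {Omega : measurableType d}
  (nu : {measure set Omega -> \bar R}) {S : Type} {A : finType}
  (u : S -> Omega -> A -> R).
Hypothesis u01 : forall s w a, 0 <= u s w a <= 1.
Hypothesis u_meas : forall s a, measurable_fun setT (fun w => u s w a).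

Definition mixed_scheme (pi : S -> Omega -> A -> R) (s : S) (δ : R)
    : S -> Omega -> A -> R :=
  fun s' w a => if `[< s' = s >]
    then (1 - δ) * pi s' w a + δ * best_response u s' w a
    else best_response u s' w a.

Variables (pi : S -> Omega -> A -> R) (s : S) (δ : R).
Hypotheses (pi_scheme : signaling_scheme pi) (δ01 : 0 <= δ <= 1).

Lemma mixed_scheme_signaling : signaling_scheme (mixed_scheme pi s δ).
Proof.
have [a0] := scheme_inhabited s pi_scheme.
have [δ0 δ1] := andP δ01.
split=> [s' w|s' a].
  rewrite /mixed_scheme; case: asboolP => _; split; last 1 first.
  - exact: best_response_sum.
  - move=> a; have := scheme_bounds s' w a pi_scheme.
    have := best_response_bounds u s' w a; move=> /andP[? _] /andP[? _].
    by rewrite addr_ge0 // mulr_ge0 // subr_ge0.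
  - rewrite big_split /= -!mulr_sumr (best_response_sum u s' w a0).
    by rewrite (pi_scheme.1 s' w).2; ring.
  - by move=> a; case/andP: (best_response_bounds u s' w a).
rewrite /mixed_scheme; case: asboolP => _; last exact: best_response_measurable.
apply: measurable_funD; apply: measurable_funM => //;
  [exact: pi_scheme.2 | exact: best_response_measurable].
Qed.

Lemma mixed_scheme_robust (mu : Omega -> R) (eps p0 D : R) :
  Pers nu mu u pi -> is_density nu mu -> regular nu u s mu p0 D -> 0 < D ->
  δ = 1 \/ eps <= δ * D * p0 ->
  PersB nu (l1ball nu mu eps) u (mixed_scheme pi s δ).
Proof.
move=> [_ obedient] dmu reg D0 δ_choice.
split; first exact: mixed_scheme_signaling.
move=> mu' [dmu' close]; split; first exact: mixed_scheme_signaling.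
move=> s' a a'; have [<-|neq_aa'] := eqVneq a a'.
  by apply: integral_ge0 => w _; rewrite subrr mulr0.
have pointwise_obedient (f : Omega -> R) :
    (forall w, 0 <= f w * (u s' w a - u s' w a')) ->
    (0 <= \int[nu]_w (mu' w * f w * (u s' w a - u s' w a'))%:E)%E.
  move=> f_ok; apply: integral_ge0 => w _; rewrite lee_fin -mulrA.
  by apply: mulr_ge0 => //; case: dmu' => + _ _; apply.
rewrite /mixed_scheme; have [eq_s|neq_s] := pselect (s' = s); last first.
  rewrite asboolF //; apply: pointwise_obedient => w.
  exact: best_response_obedient.
rewrite asboolT //; subst s'.
case: δ_choice => [δ_eq1|eps_le].
  apply: pointwise_obedient => w; rewrite δ_eq1 subrr mul0r add0r mul1r.
  exact: best_response_obedient.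
apply: (@mixed_obedience_robust _ _ _ nu _ _ u u01 u_meas s a a' D δ mu mu'
  (fun w => pi s w a)) => //.
- by move=> w; apply: scheme_bounds.
- exact: pi_scheme.2.
- by apply: le_trans close _; rewrite lee_fin.
Qed.

Lemma mixed_scheme_value (Q : S -> Omega -> A -> R) (H : R) (mu : Omega -> R) :
  is_density nu mu -> (forall w a, 0 <= Q s w a <= H) ->
  (forall a, measurable_fun setT (fun w => Q s w a)) ->
  (value nu Q mu pi s <= value nu Q mu (mixed_scheme pi s δ) s + (δ * H)%:E)%E.
Proof.
move=> dmu Q0H Q_meas.
apply: (value_mixing_loss nu Q pi _ (best_response u)) => //.
- by move=> w a; case/andP: (scheme_bounds s w a pi_scheme).
- exact: (fun w => (pi_scheme.1 s w).2).
- exact: pi_scheme.2.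
- by move=> w a; case/andP: (best_response_bounds u s w a).
- exact: mixed_scheme_signaling.2.
- by move=> w a; rewrite /mixed_scheme asboolT.
Qed.

End MixedScheme.

Theorem mainTheorem7 (R : realType) (d : measure_display) (Omega : measurableType d)
  (nu : {measure set Omega -> \bar R}) (S : Type) (A : finType)
  (u Q : S -> Omega -> A -> R) (H p0 D : R) (s : S) (mu : Omega -> R) :
  (forall s' w a, 0 <= u s' w a <= 1) ->
  (forall s' w a, 0 <= Q s' w a <= H) ->
  (forall s' a, measurable_fun setT (fun w => u s' w a)) ->
  (forall s' a, measurable_fun setT (fun w => Q s' w a)) ->
  0 < p0 -> 0 < D ->
  is_density nu mu ->
  regular nu u s mu p0 D ->
  forall eps : R, 0 < eps ->
  (Gap nu u Q s mu (l1ball nu mu eps) <= (H * eps / (p0 * D))%:E)%E.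
Proof.
move=> u01 Q0H u_meas Q_meas p0_gt0 D_gt0 dmu reg eps eps_gt0.
pose δ := Num.min (eps / (p0 * D)) 1.
have δ01 : 0 <= δ <= 1.
  by rewrite ge_min lexx orbT le_min ler01 andbT divr_ge0 ?mulr_ge0 ?ltW.
have δ_choice : δ = 1 \/ eps <= δ * D * p0.
  have [small|large] := leP (eps / (p0 * D)) 1; last by left; rewrite /δ min_r // ltW.
  right; rewrite /δ min_l // -mulrA [D * p0]mulrC divfK //.
  by rewrite mulf_neq0 // gt_eqF.
rewrite /Gap lee_subel_addr //; apply: ge_ereal_sup => _ [pi pers <-].
have [a0] := scheme_inhabited s pers.1.
have H_ge0 : 0 <= H by case/andP: (Q0H s point a0); exact: le_trans.
have loss : δ * H <= H * eps / (p0 * D).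
  by rewrite mulrC -mulrA ler_wpM2l // ge_min lexx.
apply: le_trans
  (mixed_scheme_value nu u u_meas pi s δ pers.1 δ01 Q H mu dmu (Q0H s) (Q_meas s)) _.
rewrite addeC; apply: leeD; first by rewrite lee_fin.
apply: ereal_sup_ubound; exists (mixed_scheme u pi s δ) => //.
exact: (mixed_scheme_robust nu u u01 u_meas pi s δ pers.1 δ01 mu eps p0 D
  pers dmu reg D_gt0 δ_choice).
Qed.
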